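(* Fix $\alpha>0$, $y_0\in\mathrm{dom}\, h$. Let TAA be: $\lambda=2\alpha/(\alpha+\sqrt{\alpha^2+4L\alpha})$, $s_0=\nabla f(y_0)$, $\tilde x_0=y_0$, $x_0=\mathrm{argmin}_x\{\langle s_0,x\rangle+h^\alpha(x)\}$, and for $k\ge0$: $\tilde x_{k+1}=(1-\lambda)y_k+\lambda x_k$, $s_{k+1}=(1-\lambda)s_k+\lambda\nabla f(\tilde x_{k+1})$, $x_{k+1}=\mathrm{argmin}_x\{\langle s_{k+1},x\rangle+h^\alpha(x)\}$, $y_{k+1}=(1-\lambda)y_k+\lambda x_{k+1}$. Let GEM with $\nu^*=Lf^*$ be: $g_0=z_0=\nabla f(y_0)$, $v_{-1}=v_0=\nabla(h^\alpha)^*(-g_0)$, $\tau_0=\alpha/L$, $A_0=1$, $a_{-1}=0$, and for $k\ge0$: $a_k=\frac{\tau_k+\sqrt{\tau_k^2+4\tau_kA_k}}{2}$, $\tau_{k+1}=\tau_k+\alpha a_k/L$, $A_{k+1}=A_k+a_k$, $\hat v_k=v_k+\frac{a_{k-1}}{a_k}(v_k-v_{k-1})$, $g_{k+1}=\mathrm{argmin}_g\{a_k[\langle-\hat v_k,g\rangle+f^*(g)]+\frac{\tau_k}{\alpha}\operatorname{D}_{\nu^*}(g\|g_k)\}$, $z_{k+1}=\frac{A_k}{A_{k+1}}z_k+\frac{a_k}{A_{k+1}}g_{k+1}$, $v_{k+1}=\nabla(h^\alpha)^*(-z_{k+1})$, where $\operatorname{D}_{\nu^*}(g\|g_k)=L[f^*(g)-f^*(g_k)-\langle\tilde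 x_k,g-g_k\rangle]$ (using the subgradient $\tilde x_k\in\partial f^*(g_k)$). Then the two methods are equivalent with, for all $k\ge0$, $\nabla f(\tilde x_k)=g_k$, $s_k=z_k$, and $x_k=v_k$.
   Context: Let $\|\cdot\|$ be a norm on $\mathbb{R}^n$ with dual norm $\|\cdot\|_*$. Let $f:\mathbb{R}^n\to\mathbb{R}$ be convex, differentiable and $L$-smooth ($L>0$) with respect to $\|\cdot\|$, $h:\mathbb{R}^n\to(-\infty,\infty]$ closed proper convex with bounded domain, and $w:\mathbb{R}^n\to[0,+\infty]$ closed, $1$-strongly convex with respect to $\|\cdot\|$ on $\mathrm{dom}\, h$, with $\max_{\mathrm{dom}\, h}w<\infty$. Let $h^\alpha=h+\alpha w$; $^*$ denotes convex conjugate ($(h^\alpha)^*$ is differentiable). *)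

From HB Require Import structures.
From mathcomp Require Import all_boot all_order all_algebra.
From mathcomp Require Import all_classical all_reals all_analysis.
Set Implicit Arguments. Unset Strict Implicit. Unset Printing Implicit Defensive.
Import Order.TTheory GRing.Theory Num.Theory.
Import numFieldNormedType.Exports.
Local Open Scope classical_set_scope.
Local Open Scope ring_scope.

Section Defs.
Variables (R : realType) (n : nat).
Notation V := 'rV[R]_n.

Definition dotp (s x : V) : R := \sum_(i < n) s 0 i * x 0 i.

Definition is_norm (nrm : V -> R) : Prop :=
  [/\ forall x, 0 <= nrm x,
      forall x, nrm x = 0 -> x = 0,
      forall (c : R) x, nrm (c *: x) = `|c| * nrm x &
      forall x y, nrm (x + y) <= nrm x + nrm y].

Definition dual_norm (nrm : V -> R) (s : V) : R :=
  sup [set dotp s x | x in [set x | nrm x <= 1]].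

Definition is_gradient (F : V -> R) (g : V -> V) : Prop :=
  forall x, differentiable F x /\ forall u, 'd F x u = dotp (g x) u.

Definition convex_fun (F : V -> R) : Prop :=
  forall x y (t : R), 0 <= t <= 1 ->
    F (t *: x + (1 - t) *: y) <= t * F x + (1 - t) * F y.

Definition smooth_wrt (nrm : V -> R) (L : R) (gradf : V -> V) : Prop :=
  forall x y, dual_norm nrm (gradf x - gradf y) <= L * nrm (x - y).

Definition edom (h : V -> \bar R) : set V := [set x | (h x < +oo)%E].

Definition eclosed (h : V -> \bar R) : Prop :=
  forall c : R, closed [set x | (h x <= c%:E)%E].

Definition eproper (h : V -> \bar R) : Prop :=
  (forall x, h x <> -oo%E) /\ exists x, (h x < +oo)%E.

Definition econvex (h : V -> \bar R) : Prop :=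
  forall (x y : V) (t : R), 0 < t < 1 ->
    (h (t *: x + (1 - t) *: y)%R <= t%:E * h x + (1 - t)%:E * h y)%E.

Definition ebounded_dom (nrm : V -> R) (h : V -> \bar R) : Prop :=
  exists M : R, forall x, edom h x -> nrm x <= M.

Definition strongly_convex_on (nrm : V -> R) (D : set V) (w : V -> \bar R) : Prop :=
  forall (x y : V) (t : R), D x -> D y -> 0 < t < 1 ->
    (w (t *: x + (1 - t) *: y)%R <=
       t%:E * w x + (1 - t)%:E * w y - (t * (1 - t) / 2 * nrm (x - y) ^+ 2)%:E)%E.

Definition conj_real (F : V -> R) (s : V) : \bar R :=
  ereal_sup [set ((dotp s x - F x)%:E) | x in [set: V]].

Definition conj_ext (h : V -> \bar R) (s : V) : \bar R :=
  ereal_sup [set ((dotp s x)%:E - h x)%E | x in [set: V]].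

Definition is_argmin (F : V -> \bar R) (x : V) : Prop :=
  forall y, (F x <= F y)%E.

End Defs.

(* u_{k-1} with u_{-1} := um1 *)
Definition prevseq {T : Type} (u : nat -> T) (um1 : T) (k : nat) : T :=
  if k is k'.+1 then u k' else um1.

From HB Require Import structures.
From mathcomp Require Import all_boot all_order all_algebra.
From mathcomp Require Import all_classical all_reals all_analysis.
From mathcomp Require Import ring lra.
Set Implicit Arguments. Unset Strict Implicit.
Import Order.TTheory GRing.Theory Num.Theory.
Import numFieldNormedType.Exports.
Local Open Scope classical_set_scope.
Local Open Scope ring_scope.

(* Both methods are driven by two first-order optimality facts.  The GEM
   objective for g_{k+1} equals (a_k + tau_k L / alpha) (f^* - <q_k, .>) up to a
   constant, and f^* - <q, .> is minimized only at grad f(q), because the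
   Fenchel-Young inequality is tight only at the gradient.  A minimizer x of
   <s, .> + h^alpha is a subgradient of (h^alpha)^* at -s, hence
   x = grad (h^alpha)^*(-s); the bounded domain keeps (h^alpha)^* finite.
   The step sizes satisfy tau_k = (alpha / L) A_k and A_{k+1} = (1 + a_0) A_k,
   so a_k / A_{k+1} = lambda and the GEM query point q_k is TAA's extrapolated
   point xt_{k+1}; an induction on k then carries s_k = z_k along. *)

Section Dotp.
Variables (R : realType) (n : nat).
Implicit Types (s x y : 'rV[R]_n) (c : R).

Lemma dotpC s x : dotp s x = dotp x s.
Proof. by apply: eq_bigr => i _; rewrite mulrC. Qed.

Lemma dotpDr s x y : dotp s (x + y) = dotp s x + dotp s y.
Proof. by rewrite /dotp -big_split; apply: eq_bigr => i _; rewrite mxE mulrDr. Qed.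

Lemma dotpZr s c x : dotp s (c *: x) = c * dotp s x.
Proof. by rewrite /dotp mulr_sumr; apply: eq_bigr => i _; rewrite mxE mulrCA. Qed.

Lemma dotpNr s x : dotp s (- x) = - dotp s x.
Proof. by rewrite -scaleN1r dotpZr mulN1r. Qed.

Lemma dotpBr s x y : dotp s (x - y) = dotp s x - dotp s y.
Proof. by rewrite dotpDr dotpNr. Qed.

Lemma dotpDl s x y : dotp (x + y) s = dotp x s + dotp y s.
Proof. by rewrite dotpC dotpDr !(dotpC s). Qed.

Lemma dotpZl s c x : dotp (c *: x) s = c * dotp x s.
Proof. by rewrite dotpC dotpZr dotpC. Qed.

Lemma dotpNl s x : dotp (- x) s = - dotp x s.
Proof. by rewrite dotpC dotpNr dotpC. Qed.

Lemma dotpBl s x y : dotp (x - y) s = dotp x s - dotp y s.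
Proof. by rewrite dotpDl dotpNl. Qed.

Lemma dotpp_eq0 x : (dotp x x == 0) = (x == 0).
Proof.
apply/eqP/eqP => [|->]; last by rewrite /dotp big1 // => i _; rewrite mxE mul0r.
move=> /eqP; rewrite psumr_eq0 => [/allP x0|i _]; last by rewrite -expr2 sqr_ge0.
apply/matrixP => i j; rewrite mxE ord1.
by have := x0 j (mem_index_enum _); rewrite /= -expr2 sqrf_eq0 => /eqP.
Qed.

Lemma mx_norm_coord_le (m : nat) (x : 'M[R]_(m, n)) i j : `|x i j| <= `|x|.
Proof. by rewrite [leRHS]/Num.norm /= mx_normrE; apply/bigmax_geP; right; exists (i, j). Qed.

Lemma dotp_le_sum_norm s x : dotp s x <= (\sum_(j < n) `|s 0 j|) * `|x|.
Proof.
rewrite /dotp mulr_suml; apply: ler_sum => j _.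
by apply: le_trans (ler_norm _) _; rewrite normrM ler_wpM2l // mx_norm_coord_le.
Qed.

End Dotp.

Section Gradient.
Variables (R : realType) (n : nat) (F : 'rV[R]_n -> R).
Implicit Types (p q u x G : 'rV[R]_n).

Lemma diff_quotient_cvg q u : differentiable F q ->
  (fun t : R => t^-1 * (F (q + t *: u) - F q)) @ 0^'+ --> 'd F q u.
Proof.
move=> dF; rewrite -deriveE //.
have right_dnbhs : (0 : R)^'+ `=>` 0^' by apply: within_subset => t /= /lt0r_neq0.
rewrite (_ : (fun t => _) = fun t => t^-1 *: ((F \o shift q) (t *: u) - F q)).
  apply: cvg_trans (cvg_app _ right_dnbhs) _.
  exact: (@diff_derivable _ _ _ F q u dF).
by apply: funext => t /=; rewrite [t *: u + q]addrC.
Qed.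

Lemma subgradient_le_diff q G u : differentiable F q ->
  (forall p, F q + dotp G (p - q) <= F p) -> dotp G u <= 'd F q u.
Proof.
move=> dF Gsub; apply: (cvgr_to_ge (diff_quotient_cvg (u := u) dF)).
near=> t; have t_gt0 : 0 < t by near: t; exact: nbhs_right_gt.
rewrite ler_pdivlMl // lerBrDl -dotpZr.
by have := Gsub (q + t *: u); rewrite addrAC subrr add0r.
Unshelve. all: end_near.
Qed.

Lemma diff_le_convex q x : convex_fun F -> differentiable F q ->
  'd F q (x - q) <= F x - F q.
Proof.
move=> Fcvx dF; apply: (cvgr_to_le (diff_quotient_cvg (u := x - q) dF)).
near=> t; have t_gt0 : 0 < t by near: t; exact: nbhs_right_gt.
have t_le1 : t <= 1 by near: t; apply: nbhs_right_le; exact: ltr01.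
rewrite ler_pdivrMl // (_ : q + t *: (x - q) = t *: x + (1 - t) *: q).
  by have := Fcvx x q t; rewrite (ltW t_gt0) t_le1 => /(_ isT); lra.
by rewrite scalerBr scalerBl scale1r addrCA addrA.
Unshelve. all: end_near.
Qed.

Section WithGradient.
Variable (g : 'rV[R]_n -> 'rV[R]_n).
Hypothesis gradF : is_gradient F g.

Lemma convex_grad_subgradient q x : convex_fun F -> F q + dotp (g q) (x - q) <= F x.
Proof.
move=> Fcvx; have [dF dFE] := gradF q.
by rewrite -lerBrDl -dFE diff_le_convex.
Qed.

Lemma subgradient_grad q G : (forall p, F q + dotp G (p - q) <= F p) -> g q = G.
Proof.
move=> Gsub; have [dF dFE] := gradF q.
have le_grad u : dotp G u <= dotp (g q) u by rewrite -dFE subgradient_le_diff.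
have orth u : dotp (g q - G) u = 0.
  apply/eqP; rewrite dotpBl eq_le subr_le0 subr_ge0 le_grad /=.
  by rewrite -lerN2 -!dotpNr le_grad.
by apply/eqP; rewrite -subr_eq0 -dotpp_eq0 orth.
Qed.

End WithGradient.
End Gradient.

Section NormEquivalence.
Variables (R : realType) (n : nat) (nrm : 'rV[R]_n -> R).
Hypothesis nrm_norm : is_norm nrm.

Lemma nrm0 : nrm 0 = 0.
Proof. by case: nrm_norm => _ _ nrmZ _; rewrite -(scale0r 0) nrmZ normr0 mul0r. Qed.

Lemma nrmN x : nrm (- x) = nrm x.
Proof. by case: nrm_norm => _ _ nrmZ _; rewrite -scaleN1r nrmZ normrN1 mul1r. Qed.

Lemma nrm_le_mx_norm : exists2 C, 0 < C & forall x, nrm x <= C * `|x|.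
Proof.
case: nrm_norm => nrm_ge0 _ nrmZ nrmD; set C := \sum_(j < n) nrm (delta_mx 0 j).
have C_ge0 : 0 <= C by rewrite sumr_ge0.
exists (1 + C) => [|x]; first by rewrite ltr_pwDl.
rewrite [x in nrm x]matrix_sum_delta big_ord1 mulrDl mul1r.
apply: (@le_trans _ _ (C * `|x|)); last by rewrite lerDr.
rewrite /C mulr_suml; elim/big_rec2: _ => [|j c s _ IH]; first by rewrite nrm0.
apply: le_trans (nrmD _ _) _; rewrite lerD // nrmZ mulrC ler_wpM2l //.
exact: mx_norm_coord_le.
Qed.

Lemma nrm_continuous : continuous nrm.
Proof.
move=> x; have [C C_gt0 nrm_le] := nrm_le_mx_norm.
have nrm_dist y : `|nrm x - nrm y| <= nrm (x - y).
  case: nrm_norm => _ _ _ nrmD.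
  have := nrmD (x - y) y; have := nrmD (y - x) x; rewrite !subrK -opprB nrmN.
  by rewrite ler_norml => *; apply/andP; split; lra.
apply/(@cvgrPdist_lt _ _ _ (nbhs x)) => e e_gt0; near=> y.
rewrite (le_lt_trans (nrm_dist y)) // (le_lt_trans (nrm_le _)) // -ltr_pdivlMl //.
by near: y; apply: cvgr_dist_lt; [exact: cvg_id | rewrite mulr_gt0 ?invr_gt0].
Unshelve. all: by end_near.
Qed.

Lemma mx_norm_le_nrm : exists2 m, 0 < m & forall x, m * `|x| <= nrm x.
Proof.
case: nrm_norm => nrm_ge0 nrm_eq0 nrmZ _.
set S := [set u : 'rV[R]_n | `|u| = 1].
have normalize_S x : x != 0 -> S (`|x|^-1 *: x) by move=> x0; exact: normfZV.
have [[u0 Su0]|S0] := pselect (S !=set0); last first.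
  exists 1 => // x; have [->|x0] := eqVneq x 0; first by rewrite normr0 mulr0 nrm0.
  by exfalso; apply: S0; exists (`|x|^-1 *: x); exact: normalize_S.
have S_compact : compact S.
  apply: bounded_closed_compact; first by exists 1; split => // M M1 x /= ->; exact: ltW.
  exact: (closed_comp (fun _ _ => @norm_continuous _ _ _)) (@closed_eq _ 1).
have [c Sc cmin] := EVT_min_rV (ex_intro _ u0 Su0) S_compact
  (continuous_subspaceT nrm_continuous).
have c0 : c != 0.
  by apply/eqP => c0; move: Sc; rewrite in_setE /S /= c0 normr0 => /esym/eqP; rewrite oner_eq0.
exists (nrm c) => [|x].
  by rewrite lt_def nrm_ge0 andbT; apply: contra c0 => /eqP/nrm_eq0 ->.
have [->|x0] := eqVneq x 0; first by rewrite normr0 mulr0 nrm0.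
have := cmin _ (mem_set (normalize_S x x0)).
by rewrite nrmZ ger0_norm ?invr_ge0 // ler_pdivlMl ?normr_gt0 // mulrC.
Qed.

End NormEquivalence.

Lemma ebounded_dom_mx_norm (R : realType) n (nrm : 'rV[R]_n -> R) (h : 'rV[R]_n -> \bar R) :
  is_norm nrm -> ebounded_dom nrm h -> exists B, forall u, edom h u -> `|u| <= B.
Proof.
move=> nrm_norm [M hM]; have [m m_gt0 m_le] := mx_norm_le_nrm nrm_norm.
by exists (M / m) => u /hM uM; rewrite ler_pdivlMr // mulrC (le_trans (m_le u)).
Qed.

Lemma conj_real_ge (R : realType) n (F : 'rV[R]_n -> R) s x :
  ((dotp s x - F x)%:E <= conj_real F s)%E.
Proof. by apply: ereal_sup_ubound; exists x. Qed.

Section ConvexConjugate.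
Variables (R : realType) (n : nat) (f : 'rV[R]_n -> R) (gradf : 'rV[R]_n -> 'rV[R]_n).
Hypotheses (gradf_f : is_gradient f gradf) (f_convex : convex_fun f).
Local Notation fstar := (conj_real f).

Lemma conj_real_grad q : fstar (gradf q) = (dotp (gradf q) q - f q)%:E.
Proof.
apply/eqP; rewrite eq_le conj_real_ge andbT; apply: ge_ereal_sup => _ [x _ <-].
by rewrite lee_fin; have := convex_grad_subgradient gradf_f q x f_convex; rewrite dotpBr; lra.
Qed.

Lemma conj_real_le_grad q G : (fstar G <= (dotp G q - f q)%:E)%E -> G = gradf q.
Proof.
move=> FY; apply/esym/(subgradient_grad gradf_f) => p.
by have := le_trans (conj_real_ge f G p) FY; rewrite lee_fin dotpBr; lra.
Qed.

Lemma argmin_conj_grad q G :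
  is_argmin (fun u => fstar u - (dotp q u)%:E)%E G -> G = gradf q.
Proof.
move=> Gmin; apply: conj_real_le_grad.
have := Gmin (gradf q); rewrite conj_real_grad -EFinB [dotp q (gradf q)]dotpC.
by rewrite addrAC subrr add0r leeBlDr // -EFinD addrC dotpC.
Qed.

Lemma gem_argmin_grad (b c L : R) (vh xk gk gn : 'rV[R]_n) :
  0 < b -> 0 < c -> 0 < L -> fstar gk \is a fin_num ->
  is_argmin (fun u => ((b%:E * ((dotp (- vh) u)%:E + fstar u)
    + c%:E * (L%:E * (fstar u - fstar gk - (dotp xk (u - gk))%:E))))%E) gn ->
  gn = gradf ((b + c * L)^-1 *: (b *: vh + (c * L) *: xk)).
Proof.
move=> b_gt0 c_gt0 L_gt0 gk_fin gn_min; set K := b + c * L.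
have K_gt0 : 0 < K by rewrite addr_gt0 // mulr_gt0.
apply: argmin_conj_grad => u.
rewrite -(fineK gk_fin) in gn_min; set r := fine (fstar gk) in gn_min.
have objE w : ((b%:E * ((dotp (- vh) w)%:E + fstar w)
    + c%:E * (L%:E * (fstar w - r%:E - (dotp xk (w - gk))%:E))))%E =
  (K%:E * (fstar w - (dotp (K^-1 *: (b *: vh + (c * L) *: xk)) w)%:E)
    + (c * L * (dotp xk gk - r))%:E)%E.
  case: (fstar w) => [r1||] /=.
  - rewrite -!EFinB -!EFinD; congr EFin.
    rewrite !dotpZl dotpDl !dotpZl dotpNl dotpBr.
    by move: (lt0r_neq0 K_gt0); rewrite /K => K_neq0; field.
  - by rewrite !(addye, addey, gt0_muley) ?lte_fin.
  - by rewrite !(addNye, addeNy, gt0_muleNy) ?lte_fin.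
by have := gn_min u; rewrite !objE leeD2rE // lee_pmul2l ?lte_fin.
Qed.
End ConvexConjugate.

Lemma conj_ext_ge (R : realType) n (H : 'rV[R]_n -> \bar R) p x :
  ((dotp p x)%:E - H x <= conj_ext H p)%E.
Proof. by apply: ereal_sup_ubound; exists x. Qed.

Section ConjugateBoundedDomain.
Variables (R : realType) (n : nat) (H : 'rV[R]_n -> \bar R) (B : R) (s x : 'rV[R]_n).
Hypotheses (H_proper : eproper H) (H_bounded : forall u, edom H u -> `|u| <= B).
Hypothesis x_min : is_argmin (fun u => ((dotp s u)%:E + H u)%E) x.

Lemma argmin_fin_num : H x \is a fin_num.
Proof.
case: H_proper => H_neqNy [u Hu_lty]; move: (H_neqNy x).
have := le_lt_trans (x_min u) (lte_add_pinfty (ltry (dotp s u)) Hu_lty).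
by case: (H x).
Qed.

Let hx := fine (H x).

(* The argmin inequality bounds H below by an affine function on its bounded domain. *)
Lemma conj_ext_le p :
  (conj_ext H p <= (dotp (- s) x - hx + (\sum_(j < n) `|(p + s) 0 j|) * B)%:E)%E.
Proof.
apply: ge_ereal_sup => _ [u _ <-].
case: H_proper => H_neqNy _.
case Hu: (H u) => [r||]; [|by rewrite /= addeNy leNye|by have := H_neqNy u; rewrite Hu].
have u_le : `|u| <= B by apply: H_bounded; rewrite /edom /= Hu ltry.
have := x_min u; rewrite -(fineK argmin_fin_num) Hu -!EFinD !lee_fin -/hx.
have := dotp_le_sum_norm (p + s) u; rewrite dotpDl dotpNl.
have S_ge0 : 0 <= \sum_(j < n) `|(p + s) 0 j| by rewrite sumr_ge0.
have := ler_wpM2l S_ge0 u_le; lra.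
Qed.

Lemma conj_ext_fin_num p : conj_ext H p \is a fin_num.
Proof.
rewrite fin_numE; apply/andP; split.
  by rewrite -ltNye (lt_le_trans _ (conj_ext_ge H p x)) // -(fineK argmin_fin_num) -EFinB ltNyr.
by rewrite -ltey (le_lt_trans (conj_ext_le p)) ?ltry.
Qed.

Lemma conj_ext_argmin : conj_ext H (- s) = (dotp (- s) x - hx)%:E.
Proof.
apply/eqP; rewrite eq_le; apply/andP; split.
  by have := conj_ext_le (- s); rewrite addNr big1 ?mul0r ?addr0 // => j _; rewrite mxE normr0.
by rewrite EFinB /hx fineK ?conj_ext_ge // argmin_fin_num.
Qed.

Lemma argmin_conj_ext_grad (gradHc : 'rV[R]_n -> 'rV[R]_n) :
  is_gradient (fun p => fine (conj_ext H p)) gradHc -> gradHc (- s) = x.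
Proof.
move=> gradHc_grad; apply: (subgradient_grad gradHc_grad) => p.
rewrite conj_ext_argmin /= -lee_fin (fineK (conj_ext_fin_num p)).
apply: le_trans (conj_ext_ge H p x); rewrite -(fineK argmin_fin_num) -EFinB lee_fin -/hx.
by rewrite [dotp x _]dotpC dotpBl !dotpNl; lra.
Qed.

End ConjugateBoundedDomain.

Section Regularization.
Variables (R : realType) (n : nat) (h w : 'rV[R]_n -> \bar R) (alpha : R).
Hypotheses (alpha_gt0 : 0 < alpha) (h_proper : eproper h) (w_ge0 : forall u, (0 <= w u)%E).
Hypothesis w_bounded : exists M : R, forall u, edom h u -> (w u <= M%:E)%E.

Let aw_ge0 u : (0 <= alpha%:E * w u)%E.
Proof. by rewrite mule_ge0 // lee_fin ltW. Qed.

Lemma edom_regularized : edom (fun u => h u + alpha%:E * w u)%E = edom h.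
Proof.
case: h_proper => h_neqNy _; case: w_bounded => M wM.
apply/seteqP; split => u; rewrite /edom /=.
  case: (h u) (h_neqNy u) => [r| |] // _; first by rewrite ltry.
  by rewrite addye // gt_eqF // (lt_le_trans _ (aw_ge0 u)) ?ltNyr.
move=> hu; rewrite lte_add_pinfty // (le_lt_trans (y := (alpha * M)%:E)) ?ltry //.
by rewrite EFinM lee_pmul2l ?lte_fin // wM.
Qed.

Lemma eproper_regularized : eproper (fun u => h u + alpha%:E * w u)%E.
Proof.
case: h_proper => h_neqNy [u hu]; split; last first.
  by exists u; have : edom h u := hu; rewrite -edom_regularized.
move=> x; have := aw_ge0 x; have := h_neqNy x.
by case: (h x) => [r| |] //; case: (alpha%:E * w x)%E.
Qed.

End Regularization.

Section TAA.
Variables (R : realType) (n : nat) (lam : R) (xt x y : nat -> 'rV[R]_n).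
Hypotheses (xt0 : xt 0%N = y 0%N)
  (xtS : forall k, xt k.+1 = (1 - lam) *: y k + lam *: x k)
  (yS : forall k, y k.+1 = (1 - lam) *: y k + lam *: x k.+1).

Lemma taa_xt_extrapolation k :
  xt k.+1 = (1 - lam) *: xt k + lam *: (x k + (1 - lam) *: (x k - prevseq x (x 0%N) k)).
Proof.
case: k => [|k] /=; first by rewrite subrr scaler0 addr0 xtS xt0.
by rewrite !xtS yS; apply/matrixP => i j; rewrite !mxE; ring.
Qed.

End TAA.

Section GemStepSizes.
Variables (R : realType) (alpha L : R) (tau A a : nat -> R).
Hypotheses (alpha_gt0 : 0 < alpha) (L_gt0 : 0 < L).
Hypotheses (tau0 : tau 0%N = alpha / L) (A0 : A 0%N = 1).
Hypothesis aE : forall k, a k = (tau k + Num.sqrt (tau k ^+ 2 + 4 * tau k * A k)) / 2.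
Hypotheses (tauS : forall k, tau k.+1 = tau k + alpha * a k / L)
  (AS : forall k, A k.+1 = A k + a k).

Let t := alpha / L.
Let t_gt0 : 0 < t. Proof. exact: divr_gt0. Qed.
Let S := Num.sqrt (t ^+ 2 + 4 * t).

Let a0E : a 0%N = (t + S) / 2.
Proof. by rewrite aE tau0 A0 mulr1. Qed.

Lemma gem_a0_gt0 : 0 < a 0%N.
Proof. by rewrite a0E divr_gt0 // ltr_wpDr ?sqrtr_ge0 ?t_gt0. Qed.

Let a_homogeneous k : tau k = t * A k -> 0 < A k -> a k = a 0%N * A k.
Proof.
move=> tauE A_gt0; rewrite aE a0E tauE.
suff -> : Num.sqrt ((t * A k) ^+ 2 + 4 * (t * A k) * A k) = S * A k by rewrite /S; ring.
rewrite (_ : _ + _ = (t ^+ 2 + 4 * t) * A k ^+ 2); last by ring.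
by rewrite sqrtrM ?sqrtr_sqr ?gtr0_norm // addr_ge0 ?sqr_ge0 // mulr_ge0 ?(ltW t_gt0).
Qed.

Let gem_invariant k : tau k = t * A k /\ 0 < A k.
Proof.
elim: k => [|k [tauE A_gt0]]; first by rewrite tau0 A0 mulr1.
rewrite tauS AS (a_homogeneous tauE A_gt0) tauE; split.
  by rewrite /t; field; exact: lt0r_neq0.
by rewrite addr_gt0 // mulr_gt0 // gem_a0_gt0.
Qed.

Lemma gem_A_gt0 k : 0 < A k. Proof. by case: (gem_invariant k). Qed.

Lemma gem_aE k : a k = a 0%N * A k.
Proof. by case: (gem_invariant k) => tauE A_gt0; exact: a_homogeneous. Qed.

Lemma gem_a_gt0 k : 0 < a k.
Proof. by rewrite gem_aE mulr_gt0 ?gem_a0_gt0 ?gem_A_gt0. Qed.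

Lemma gem_tau_div_gt0 k : 0 < tau k / alpha.
Proof. by case: (gem_invariant k) => -> A_gt0; rewrite divr_gt0 // mulr_gt0. Qed.

Lemma gem_tau_mulL k : tau k / alpha * L = A k.
Proof.
case: (gem_invariant k) => -> _; rewrite /t.
by field; rewrite !lt0r_neq0.
Qed.

Let a0D1_neq0 : 1 + a 0%N != 0.
Proof. by rewrite lt0r_neq0 // addr_gt0 ?gem_a0_gt0. Qed.

Let AS_geometric k : A k.+1 = (1 + a 0%N) * A k.
Proof. by rewrite AS (gem_aE k); ring. Qed.

Lemma gem_weight_new k : a k / A k.+1 = a 0%N / (1 + a 0%N).
Proof. by rewrite AS_geometric (gem_aE k); field; rewrite a0D1_neq0 lt0r_neq0 ?gem_A_gt0. Qed.

Lemma gem_weight_old k : A k / A k.+1 = 1 - a 0%N / (1 + a 0%N).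
Proof. by rewrite AS_geometric; field; rewrite a0D1_neq0 lt0r_neq0 ?gem_A_gt0. Qed.

Lemma gem_ratio k : a k / a k.+1 = 1 - a 0%N / (1 + a 0%N).
Proof.
rewrite (gem_aE k) (gem_aE k.+1) AS_geometric; field.
by rewrite a0D1_neq0 !lt0r_neq0 ?gem_A_gt0 ?gem_a0_gt0.
Qed.

Lemma gem_lambdaE :
  2 * alpha / (alpha + Num.sqrt (alpha ^+ 2 + 4 * L * alpha)) = a 0%N / (1 + a 0%N).
Proof.
have t_ge0 := ltW t_gt0; have S_ge0 : 0 <= S := sqrtr_ge0 _.
have S2 : S ^+ 2 = t ^+ 2 + 4 * t by rewrite sqr_sqrtr //; nra.
have alphaE : alpha = t * L by rewrite /t divfK ?lt0r_neq0.
have -> : Num.sqrt (alpha ^+ 2 + 4 * L * alpha) = L * S.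
  rewrite alphaE (_ : _ + _ = L ^+ 2 * (t ^+ 2 + 4 * t)); last by ring.
  by rewrite sqrtrM ?sqr_ge0 // sqrtr_sqr gtr0_norm.
have tS_gt0 : 0 < t + S by rewrite ltr_wpDr ?t_gt0.
have key : (t + S) ^+ 2 = 2 * t * (2 + t + S) by rewrite sqrrD S2; ring.
rewrite a0E alphaE; transitivity (2 * t / (t + S)).
  by field; rewrite lt0r_neq0 //= lt0r_neq0 // [t * L]mulrC -mulrDr mulr_gt0.
have den_gt0 : 0 < 2 + t + S by lra.
transitivity ((t + S) / (2 + t + S)); last by field; rewrite lt0r_neq0 //; lra.
by apply/eqP; rewrite eqr_div ?lt0r_neq0 // -expr2 key; apply/eqP; ring.
Qed.

Lemma gem_momentum n (d : nat -> 'rV[R]_n) k :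
  (prevseq a 0 k / a k) *: (d k - prevseq d (d 0%N) k) =
  (1 - a 0%N / (1 + a 0%N)) *: (d k - prevseq d (d 0%N) k).
Proof. by case: k => [|k] /=; [rewrite subrr !scaler0 | rewrite gem_ratio]. Qed.

End GemStepSizes.

Theorem proposition5p3
  (R : realType) (n : nat)
  (nrm : 'rV[R]_n -> R)
  (f : 'rV[R]_n -> R) (gradf : 'rV[R]_n -> 'rV[R]_n) (L : R)
  (h w : 'rV[R]_n -> \bar R)
  (alpha : R)
  (gradhc : 'rV[R]_n -> 'rV[R]_n)
  (y0 : 'rV[R]_n)
  (* TAA sequences *)
  (xt s x y : nat -> 'rV[R]_n)
  (* GEM sequences *)
  (g z v : nat -> 'rV[R]_n) (tau A a : nat -> R) :
  (* standing assumptions *)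
  is_norm nrm ->
  is_gradient f gradf -> convex_fun f -> 0 < L -> smooth_wrt nrm L gradf ->
  eclosed h -> eproper h -> econvex h -> ebounded_dom nrm h ->
  (forall u, (0 <= w u)%E) -> eclosed w ->
  strongly_convex_on nrm (edom h) w ->
  (exists M : R, forall u, edom h u -> (w u <= M%:E)%E) ->
  let halpha := fun u => (h u + alpha%:E * w u)%E in
  (* gradhc is the gradient of (h^alpha)^* *)
  is_gradient (fun u => fine (conj_ext halpha u)) gradhc ->
  0 < alpha -> edom h y0 ->
  (* TAA *)
  let lambda := 2 * alpha / (alpha + Num.sqrt (alpha ^+ 2 + 4 * L * alpha)) in
  s 0%N = gradf y0 -> xt 0%N = y0 -> y 0%N = y0 ->
  (forall k, is_argmin (fun u => ((dotp (s k) u)%:E + halpha u)%E) (x k)) ->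
  (forall k, xt k.+1 = (1 - lambda) *: y k + lambda *: x k) ->
  (forall k, s k.+1 = (1 - lambda) *: s k + lambda *: gradf (xt k.+1)) ->
  (forall k, y k.+1 = (1 - lambda) *: y k + lambda *: x k.+1) ->
  (* GEM with nu^* = L f^* *)
  let fstar := conj_real f in
  g 0%N = gradf y0 -> z 0%N = gradf y0 ->
  tau 0%N = alpha / L -> A 0%N = 1 ->
  (forall k, a k = (tau k + Num.sqrt (tau k ^+ 2 + 4 * tau k * A k)) / 2) ->
  (forall k, tau k.+1 = tau k + alpha * a k / L) ->
  (forall k, A k.+1 = A k + a k) ->
  (forall k, v k = gradhc (- z k)) ->
  (forall k,
     let vhat := v k + (prevseq a 0 k / a k) *: (v k - prevseq v (v 0%N) k) in
     is_argmin
       (fun u => ((a k)%:E * ((dotp (- vhat) u)%:E + fstar u)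
                  + (tau k / alpha)%:E *
                    (L%:E * (fstar u - fstar (g k) - (dotp (xt k) (u - g k))%:E)))%E)
       (g k.+1)) ->
  (forall k, z k.+1 = (A k / A k.+1) *: z k + (a k / A k.+1) *: g k.+1) ->
  (* equivalence *)
  forall k, gradf (xt k) = g k /\ s k = z k /\ x k = v k.
Proof.
(* Smoothness of f, closedness and convexity of h, strong convexity of w and
   y0 \in dom h only serve to make the argmins exist and (h^alpha)^*
   differentiable; the statement assumes both outright. *)
move=> nrm_norm gradf_f f_convex L_gt0 _ _ h_proper _ h_bounded w_ge0 _ _ w_bounded.
move=> halpha gradhc_grad alpha_gt0 _ lambda s0 xt0 y0E x_min xtS sS yS fstar.
move=> g0 z0 tau0 A0 aE tauS AS vE g_min zS.
have [B dom_bounded] := ebounded_dom_mx_norm nrm_norm h_bounded.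
have x_conj k : x k = gradhc (- s k).
  apply/esym/(argmin_conj_ext_grad (B := B) _ _ (x_min k) gradhc_grad).
    exact: eproper_regularized.
  by move=> u; rewrite edom_regularized //; exact: dom_bounded.
have lambdaE : lambda = a 0%N / (1 + a 0%N) := gem_lambdaE alpha_gt0 L_gt0 tau0 A0 aE.
have xv k : s k = z k -> x k = v k by rewrite x_conj vE => ->.
have a_gt0 := gem_a_gt0 alpha_gt0 L_gt0 tau0 A0 aE tauS AS.
have c_gt0 := gem_tau_div_gt0 alpha_gt0 L_gt0 tau0 A0 aE tauS AS.
have cLE := gem_tau_mulL alpha_gt0 L_gt0 tau0 A0 aE tauS AS.
have w_new := gem_weight_new alpha_gt0 L_gt0 tau0 A0 aE tauS AS.
have w_old := gem_weight_old alpha_gt0 L_gt0 tau0 A0 aE tauS AS.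
have momentum := gem_momentum alpha_gt0 L_gt0 tau0 A0 aE tauS AS.
have step k : gradf (xt k) = g k -> s k = z k -> prevseq s (s 0%N) k = prevseq z (z 0%N) k ->
    g k.+1 = gradf (xt k.+1) /\ s k.+1 = z k.+1.
  move=> gk sk sk_prev.
  have xv_prev : prevseq x (x 0%N) k = prevseq v (v 0%N) k.
    by case: k {gk sk} sk_prev => [|j] /= /xv.
  have gk_fin : fstar (g k) \is a fin_num by rewrite -gk /fstar conj_real_grad.
  have gk1 : g k.+1 = gradf (xt k.+1).
    rewrite (gem_argmin_grad gradf_f f_convex (a_gt0 k) (c_gt0 k) L_gt0 gk_fin (g_min k)).
    rewrite cLE [a k + _]addrC -AS scalerDr !scalerA ![_^-1 * _]mulrC w_new w_old momentum.
    rewrite -lambdaE -(xv k sk) -xv_prev addrC (taa_xt_extrapolation _ xtS yS) //.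
    by rewrite xt0.
  by split => //; rewrite sS zS w_new w_old -lambdaE sk gk1.
have inv k : [/\ gradf (xt k) = g k, s k = z k & prevseq s (s 0%N) k = prevseq z (z 0%N) k].
  elim: k => [|k [gk sk sk_prev]]; first by rewrite xt0 g0 s0 z0.
  by have [<- <-] := step k gk sk sk_prev.
by move=> k; have [gk sk _] := inv k; split; [|split; [|exact: xv]].
Qed.
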